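(* Let $\mathcal{A}\in\mathbb{C}^{I_{1\ldots N}\times I_{1\ldots N}}$ and let $\mathcal{N}\in\mathbb{C}^{I_{1\ldots N}\times I_{1\ldots N}}$ be a Hermitian positive definite tensor. Put $\tilde{\mathcal{A}}=\mathcal{N}^{1/2}*_N\mathcal{A}*_N\mathcal{N}^{-1/2}$. Then: (i) $\mathcal{A}=\mathcal{A}^{\#}_{\mathcal{N}\mathcal{N}}$ if and only if $\tilde{\mathcal{A}}=\tilde{\mathcal{A}}^H$; (ii) $\mathcal{A}*_N\mathcal{A}^{\#}_{\mathcal{N}\mathcal{N}}=\mathcal{A}^{\#}_{\mathcal{N}\mathcal{N}}*_N\mathcal{A}$ if and only if $\tilde{\mathcal{A}}*_N\tilde{\mathcal{A}}^H=\tilde{\mathcal{A}}^H*_N\tilde{\mathcal{A}}$; (iii) $\mathcal{A}^{\dagger}_{\mathcal{N},\mathcal{N}}*_N(\mathcal{A}^{\dagger}_{\mathcal{N},\mathcal{N}})^{\#}_{\mathcal{N}\mathcal{N}}=(\mathcal{A}^{\dagger}_{\mathcal{N},\mathcal{N}})^{\#}_{\mathcal{N}\mathcal{N}}*_N\mathcal{A}^{\dagger}_{\mathcal{N},\mathcal{N}}$ if and only if $\tilde{\mathcal{A}}^{\dagger}*_N(\tilde{\mathcal{A}}^{\dagger})^H=(\tilde{\mathcal{A}}^{\dagger})^H*_N\tilde{\mathcal{A}}^{\dagger}$; (iv) $\mathcal{A}*_N\mathcal{A}^{\#}_{\mathcal{N}\mathcal{N}}=\mathcal{A}^{\#}_{\mathcal{N}\mathcal{N}}*_N\mathcal{A}$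 if and only if $\mathcal{A}^{\dagger}_{\mathcal{N},\mathcal{N}}*_N(\mathcal{A}^{\dagger}_{\mathcal{N},\mathcal{N}})^{\#}_{\mathcal{N}\mathcal{N}}=(\mathcal{A}^{\dagger}_{\mathcal{N},\mathcal{N}})^{\#}_{\mathcal{N}\mathcal{N}}*_N\mathcal{A}^{\dagger}_{\mathcal{N},\mathcal{N}}$.
   Context: Write $I_{1\ldots N}$ for $I_1\times\cdots\times I_N$. Einstein product: $(\mathcal{A}*_N\mathcal{B})_{i_1\ldots i_Mj_1\ldots j_L}=\sum_{k_1,\ldots,k_N}a_{i_1\ldots i_Mk_1\ldots k_N}b_{k_1\ldots k_Nj_1\ldots j_L}$. $\mathcal{A}^H$ is the conjugate transpose (entries $\overline{a_{i_1\ldots i_Nj_1\ldots j_N}}$ at position $(j_1,\ldots,j_N,i_1,\ldots,i_N)$). Identity tensor: entry 1 where the two index blocks coincide, 0 otherwise; inverses are with respect to $*_N$. $\mathcal{N}$ is Hermitian positive definite if $\mathcal{N}^H=\mathcal{N}$ and $\mathcal{X}^H*_N\mathcal{N}*_N\mathcal{X}>0$ for all nonzero $\mathcal{X}\in\mathbb{C}^{I_{1\ldots N}}$; $\mathcal{N}^{1/2}$ is its unique Hermitian positive definite square root ($\mathcal{N}^{1/2}*_N\mathcal{N}^{1/2}=\mathcal{N}$) and $\mathcal{N}^{-1/2}=(\mathcal{N}^{1/2})^{-1}$. Weighted conjugate transpose: $\mathcal{A}^{\#}_{\mathcal{N}\mathcal{N}}=\mathcal{N}^{-1}*_N\mathcal{A}^H*_N\mathcal{N}$.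 Weighted Moore-Penrose inverse $\mathcal{A}^{\dagger}_{\mathcal{M},\mathcal{N}}$ (for Hermitian positive definite $\mathcal{M},\mathcal{N}$): the unique $\mathcal{X}$ with $\mathcal{A}*_N\mathcal{X}*_N\mathcal{A}=\mathcal{A}$, $\mathcal{X}*_N\mathcal{A}*_N\mathcal{X}=\mathcal{X}$, $(\mathcal{M}*_N\mathcal{A}*_N\mathcal{X})^H=\mathcal{M}*_N\mathcal{A}*_N\mathcal{X}$, $(\mathcal{N}*_N\mathcal{X}*_N\mathcal{A})^H=\mathcal{N}*_N\mathcal{X}*_N\mathcal{A}$; $\mathcal{A}^{\dagger}$ (Moore-Penrose inverse) is the case of identity weights. *)

From HB Require Import structures.
From mathcomp Require Import all_boot all_order all_algebra.
From Stdlib Require Import ClassicalEpsilon.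
Set Implicit Arguments. Unset Strict Implicit. Unset Printing Implicit Defensive.
Import Order.TTheory GRing.Theory Num.Theory.
Local Open Scope ring_scope.

Definition mindex (N : nat) (I : 'I_N -> nat) : finType :=
  {dffun forall k : 'I_N, 'I_(I k)}.

Section Tensors.
Variables (C : numClosedFieldType) (N : nat) (I : 'I_N -> nat).
Local Notation idx := (mindex I).

Definition tensor := idx -> idx -> C.
Definition tvector := idx -> C.

Definition tmul (A B : tensor) : tensor :=
  fun i j => \sum_(k : idx) A i k * B k j.

Definition tH (A : tensor) : tensor := fun i j => (A j i)^*.

Definition tid : tensor := fun i j => (i == j)%:R.

Definition tzero : tensor := fun _ _ => 0.

Definition hpd (M : tensor) : Prop :=
  tH M = M /\
  forall X : tvector, X <> (fun _ => 0) ->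
    0 < \sum_(i : idx) \sum_(j : idx) (X i)^* * M i j * X j.

Definition the_tensor (P : tensor -> Prop) : tensor :=
  epsilon (inhabits tzero) P.

Definition tinv (A : tensor) : tensor :=
  the_tensor (fun B => tmul A B = tid /\ tmul B A = tid).

Definition tsqrt (M : tensor) : tensor :=
  the_tensor (fun S => hpd S /\ tmul S S = M).

Definition tinvsqrt (M : tensor) : tensor := tinv (tsqrt M).

Definition wct (M A : tensor) : tensor := tmul (tmul (tinv M) (tH A)) M.

Definition is_wmp (M Nw A X : tensor) : Prop :=
  [/\ tmul (tmul A X) A = A,
      tmul (tmul X A) X = X,
      tH (tmul M (tmul A X)) = tmul M (tmul A X) &
      tH (tmul Nw (tmul X A)) = tmul Nw (tmul X A)].

Definition wmp (M Nw A : tensor) : tensor := the_tensor (is_wmp M Nw A).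

Definition mp (A : tensor) : tensor := wmp tid tid A.

End Tensors.

(* Write S = N^{1/2}, a Hermitian invertible matrix, and look at everything
   through the similarity Y |-> S Y S^{-1}.  It sends A^#_{NN} to the
   conjugate transpose of Ã = S A S^{-1}, and it sends the weighted
   Moore-Penrose inverse A^†_{N,N} to Ã^†, because the four weighted Penrose
   equations for (A, X) are the ordinary ones for (Ã, S X S^{-1}).  Statements
   (i)-(iii) are thus the unweighted statements transported by a similarity.
   For (iv), a square matrix B is normal iff B^† is: (B^H B)^† = B^† (B^†)^H
   and (B B^H)^† = (B^†)^H B^†, so uniqueness of the Moore-Penrose inverse
   turns B^H B = B B^H into normality of B^†, and B = (B^†)^† gives the
   converse.  Tensors are handled as square matrices by flattening the
   multi-index. *)

From HB Require Import structures.
From Stdlib Require Import ClassicalEpsilon.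
From Stdlib Require Import FunctionalExtensionality PropExtensionality.
From mathcomp Require Import all_boot all_order all_algebra.
Set Implicit Arguments. Unset Strict Implicit. Unset Printing Implicit Defensive.
Import Order.TTheory GRing.Theory Num.Theory.
Local Open Scope ring_scope.
Local Open Scope sesquilinear_scope.

Section Adjoint.
Variable C : numClosedFieldType.

Lemma trmxC_mul m n p (A : 'M[C]_(m, n)) (B : 'M_(n, p)) :
  (A *m B)^t* = B^t* *m A^t*.
Proof. by rewrite trmx_mul map_mxM. Qed.

Lemma trmxC_inv n (A : 'M[C]_n) : (invmx A)^t* = invmx (A^t*).
Proof. by rewrite trmx_inv map_invmx. Qed.

Lemma mulmx_unit_inj m n (S : 'M[C]_m) (T : 'M[C]_n) :
  S \in unitmx -> T \in unitmx -> injective (fun Y : 'M_(m, n) => S *m Y *m T).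
Proof.
move=> uS uT Y Z /= eqSYT.
by rewrite -(mulKmx uS Y) -(mulmxK uT (S *m Y)) eqSYT mulmxK // mulKmx.
Qed.

Lemma unitmx_gram m n (G : 'M[C]_(m, n)) : row_free G -> G *m G^t* \in unitmx.
Proof.
move=> freeG; rewrite -row_free_unit; apply/inj_row_free => v vGG0.
have : dotmx (v *m G) (v *m G) == 0.
  by rewrite dotmxE trmxC_mul !mulmxA -(mulmxA v) vGG0 mul0mx mxE.
by rewrite dnorm_eq0 mulmx_free_eq0 // => /eqP.
Qed.

End Adjoint.

Section MoorePenrose.
Variable C : numClosedFieldType.

Definition moore_penrose m n (A : 'M[C]_(m, n)) (X : 'M[C]_(n, m)) :=
  [/\ A *m X *m A = A, X *m A *m X = X,
      (A *m X)^t* = A *m X & (X *m A)^t* = X *m A].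

Section Identities.
Variables (m n : nat) (A : 'M[C]_(m, n)) (X : 'M[C]_(n, m)).
Hypothesis AX : moore_penrose A X.

Lemma mp_adjAX : A^t* *m A *m X = A^t*.
Proof. by case: AX => AXA _ hAX _; rewrite -mulmxA -hAX -trmxC_mul AXA. Qed.

Lemma mp_XAadjA : X *m A *m A^t* = A^t*.
Proof. by case: AX => AXA _ _ hXA; rewrite -hXA -trmxC_mul mulmxA AXA. Qed.

Lemma mp_XadjXadjA : X *m X^t* *m A^t* = X.
Proof. by case: AX => _ XAX hAX _; rewrite -mulmxA -trmxC_mul hAX mulmxA XAX. Qed.

Lemma mp_adjAadjXX : A^t* *m X^t* *m X = X.
Proof. by case: AX => _ XAX _ hXA; rewrite -trmxC_mul hXA XAX. Qed.

End Identities.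

Lemma moore_penrose_sym m n (A : 'M[C]_(m, n)) X :
  moore_penrose A X -> moore_penrose X A.
Proof. by case. Qed.

Lemma moore_penrose_trmxC m n (A : 'M[C]_(m, n)) X :
  moore_penrose A X -> moore_penrose (A^t*) (X^t*).
Proof.
case=> AXA XAX hAX hXA.
by split; rewrite -!trmxC_mul ?mulmxA ?AXA ?XAX ?hAX ?hXA.
Qed.

Lemma moore_penrose_unique m n (A : 'M[C]_(m, n)) X Y :
  moore_penrose A X -> moore_penrose A Y -> X = Y.
Proof.
move=> AX AY.
have eXAY : X = X *m A *m Y.
  by rewrite -{1}(mp_XadjXadjA AX) -(mp_adjAX AY) !mulmxA (mp_XadjXadjA AX).
have eYXA : Y = X *m A *m Y.
  rewrite -{1}(mp_adjAadjXX AY) -(mp_XAadjA AX) -!mulmxA.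
  by rewrite (mulmxA _ _ Y) (mp_adjAadjXX AY).
exact: etrans eXAY (esym eYXA).
Qed.

Lemma moore_penrose_full_rank_mul m r n (F : 'M[C]_(m, r)) (G : 'M_(r, n)) Y Z :
    Y *m F = 1%:M -> G *m Z = 1%:M ->
    (F *m Y)^t* = F *m Y -> (Z *m G)^t* = Z *m G ->
  moore_penrose (F *m G) (Z *m Y).
Proof.
move=> YF GZ hFY hZG.
have FGZY : F *m G *m (Z *m Y) = F *m Y by rewrite mulmxA -(mulmxA F) GZ mulmx1.
have ZYFG : Z *m Y *m (F *m G) = Z *m G by rewrite mulmxA -(mulmxA Z) YF mulmx1.
split; rewrite ?FGZY ?ZYFG //.
- by rewrite -mulmxA (mulmxA Y) YF mul1mx.
- by rewrite -mulmxA (mulmxA G) GZ mul1mx.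
Qed.

Lemma moore_penrose_full_rank m r n (F : 'M[C]_(m, r)) (G : 'M_(r, n)) :
    row_free (F^t*) -> row_free G ->
  moore_penrose (F *m G) (G^t* *m invmx (G *m G^t*) *m (invmx (F^t* *m F) *m F^t*)).
Proof.
move=> freeFt freeG.
have uF : F^t* *m F \in unitmx by rewrite -{2}[F]trmxCK unitmx_gram.
have uG : G *m G^t* \in unitmx by rewrite unitmx_gram.
apply: moore_penrose_full_rank_mul.
- by rewrite -mulmxA mulVmx.
- by rewrite mulmxA mulmxV.
- by rewrite !trmxC_mul trmxCK trmxC_inv trmxC_mul trmxCK mulmxA.
- by rewrite !trmxC_mul trmxCK trmxC_inv trmxC_mul trmxCK mulmxA.
Qed.

Lemma moore_penrose_exists m n (A : 'M[C]_(m, n)) : exists X, moore_penrose A X.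
Proof.
eexists; rewrite -[X in moore_penrose X](mulmx_base A).
apply: moore_penrose_full_rank; last exact: row_base_free.
by rewrite /row_free mxrank_map mxrank_tr; exact: col_base_full.
Qed.

Lemma moore_penrose_gram m n (A : 'M[C]_(m, n)) X :
  moore_penrose A X -> moore_penrose (A^t* *m A) (X *m X^t*).
Proof.
move=> AX; have [_ XAX _ hXA] := AX.
have BZ : A^t* *m A *m (X *m X^t*) = X *m A.
  by rewrite !mulmxA (mp_adjAX AX) -trmxC_mul hXA.
have ZB : X *m X^t* *m (A^t* *m A) = X *m A by rewrite !mulmxA (mp_XadjXadjA AX).
split; rewrite ?BZ ?ZB //.
- by rewrite !mulmxA (mp_XAadjA AX).
- by rewrite mulmxA XAX.
Qed.

Lemma moore_penrose_normal n (A X : 'M[C]_n) : moore_penrose A X ->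
  A *m A^t* = A^t* *m A <-> X *m X^t* = X^t* *m X.
Proof.
have normal_mp (B Y : 'M[C]_n) : moore_penrose B Y ->
    B *m B^t* = B^t* *m B -> Y *m Y^t* = Y^t* *m Y.
  move=> BY normalB; have := moore_penrose_gram (moore_penrose_trmxC BY).
  rewrite !trmxCK normalB; exact: moore_penrose_unique (moore_penrose_gram BY).
by move=> AX; split; apply: normal_mp; last exact: moore_penrose_sym.
Qed.

End MoorePenrose.

Section PositiveDefinite.
Variable C : numClosedFieldType.

Definition posdefmx n (M : 'M[C]_n) :=
  forall x : 'rV_n, x != 0 -> 0 < (x *m M *m x^t*) 0 0.

Lemma posdefmx_unit n (M : 'M[C]_n) : posdefmx M -> M \in unitmx.
Proof.
move=> posM; rewrite -row_free_unit; apply/inj_row_free => v vM0.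
by apply/eqP; apply: contraT => /posM; rewrite vM0 mul0mx mxE ltxx.
Qed.

Lemma posdefmx1 n : posdefmx (1%:M : 'M[C]_n).
Proof. by move=> x x_neq0; rewrite mulmx1 -dotmxE dnorm_gt0. Qed.

Lemma posdefmx_congr n (P M : 'M[C]_n) :
  P \in unitmx -> posdefmx M -> posdefmx (P *m M *m P^t*).
Proof.
move=> uP posM x x_neq0.
have -> : x *m (P *m M *m P^t*) *m x^t* = x *m P *m M *m (x *m P)^t*.
  by rewrite trmxC_mul !mulmxA.
by apply: posM; rewrite mulmx_free_eq0 ?row_free_unit.
Qed.

Lemma diag_mx_unit n (d : 'rV[C]_n) :
  (forall k, d 0 k != 0) -> diag_mx d \in unitmx.
Proof. by move=> d_neq0; rewrite unitmxE det_diag unitfE; apply/prodf_neq0. Qed.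

Lemma trmxC_diag_ge0 n (d : 'rV[C]_n) :
  (forall k, 0 <= d 0 k) -> (diag_mx d)^t* = diag_mx d.
Proof.
move=> d_ge0; rewrite tr_diag_mx map_diag_mx; congr diag_mx.
by apply/rowP => k; rewrite mxE; apply: geC0_conj.
Qed.

Lemma diag_mx_sqrtC n (d : 'rV[C]_n) :
  diag_mx (map_mx sqrtC d) *m diag_mx (map_mx sqrtC d) = diag_mx d.
Proof.
by rewrite mulmx_diag; congr diag_mx; apply/rowP => k; rewrite !mxE -expr2 sqrtCK.
Qed.

Lemma posdefmx_diag n (d : 'rV[C]_n) : posdefmx (diag_mx d) <-> forall k, 0 < d 0 k.
Proof.
split=> [posd k | d_gt0].
  have e_neq0 : delta_mx 0 k != 0 :> 'rV[C]_n.
    by apply/eqP => /matrixP /(_ 0 k) /eqP; rewrite !mxE !eqxx oner_eq0.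
  have := posd _ e_neq0; rewrite -rowE row_diag_mx -scalemxAl.
  by rewrite trmx_delta map_delta_mx mul_delta_mx !mxE !eqxx mulr1.
set e := map_mx sqrtC d.
have e_ge0 k : 0 <= e 0 k by rewrite mxE sqrtC_ge0 ltW.
have e_neq0 k : e 0 k != 0 by rewrite mxE sqrtC_eq0 gt_eqF.
rewrite -diag_mx_sqrtC -[X in _ *m X]trmxC_diag_ge0 // -[X in X *m _]mulmx1.
by apply: posdefmx_congr; [exact: diag_mx_unit | exact: posdefmx1].
Qed.

Lemma hermitian_posdefmx_sqrt n (M : 'M[C]_n) : M^t* = M -> posdefmx M ->
  exists S, [/\ S^t* = S, posdefmx S & S *m S = M].
Proof.
move=> hM posM.
have /orthomx_spectralP : M \is normalmx by apply/normalmxP; rewrite hM.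
have uP := spectral_unitarymx M.
set P := spectralmx M in uP *; set d := spectral_diag M.
rewrite invmx_unitary // => eM.
have d_gt0 : forall k, 0 < d 0 k.
  apply/posdefmx_diag.
  have -> : diag_mx d = P *m M *m P^t*.
    by rewrite eM !mulmxA (unitarymxP uP) mul1mx mulmxtVK.
  exact: posdefmx_congr (unitarymx_unit uP) posM.
set e := map_mx sqrtC d.
have e_ge0 k : 0 <= e 0 k by rewrite mxE sqrtC_ge0 ltW.
exists (P^t* *m diag_mx e *m P); split.
- by rewrite !trmxC_mul trmxCK trmxC_diag_ge0 // mulmxA.
- rewrite -[X in _ *m X]trmxCK; apply: posdefmx_congr.
    by rewrite unitarymx_unit ?trmxC_unitary.
  by apply/posdefmx_diag => k; rewrite mxE sqrtC_gt0.
- by rewrite !mulmxA mulmxtVK // -(mulmxA (P^t*)) diag_mx_sqrtC eM.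
Qed.

End PositiveDefinite.

Section WeightedMoorePenrose.
Variable C : numClosedFieldType.

Definition wmoore_penrose m n (M : 'M[C]_m) (N : 'M[C]_n) (A : 'M_(m, n)) X :=
  [/\ A *m X *m A = A, X *m A *m X = X,
      (M *m (A *m X))^t* = M *m (A *m X) & (N *m (X *m A))^t* = N *m (X *m A)].

Definition wadjmx n (M A : 'M[C]_n) := invmx M *m A^t* *m M.

Lemma hermitian_congr n (S Z : 'M[C]_n) : S^t* = S -> S \in unitmx ->
  (S *m Z *m S)^t* = S *m Z *m S <-> Z^t* = Z.
Proof.
move=> hS uS; rewrite !trmxC_mul hS mulmxA.
by split=> [/(mulmx_unit_inj uS uS) | ->].
Qed.

Section SquareRootWeights.
Variables (m n : nat) (S : 'M[C]_m) (T : 'M[C]_n).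
Hypotheses (hS : S^t* = S) (hT : T^t* = T).
Hypotheses (uS : S \in unitmx) (uT : T \in unitmx).

Lemma wmoore_penrose_sqrt A X :
  wmoore_penrose (S *m S) (T *m T) A X <->
  moore_penrose (S *m A *m invmx T) (T *m X *m invmx S).
Proof.
have simAX : S *m A *m invmx T *m (T *m X *m invmx S) = S *m (A *m X) *m invmx S.
  by rewrite !mulmxA mulmxKV.
have simXA : T *m X *m invmx S *m (S *m A *m invmx T) = T *m (X *m A) *m invmx T.
  by rewrite !mulmxA mulmxKV.
have simAXA : S *m (A *m X) *m invmx S *m (S *m A *m invmx T) =
              S *m (A *m X *m A) *m invmx T by rewrite !mulmxA mulmxKV.
have simXAX : T *m (X *m A) *m invmx T *m (T *m X *m invmx S) =
              T *m (X *m A *m X) *m invmx S by rewrite !mulmxA mulmxKV.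
have hermAX : (S *m S *m (A *m X))^t* = S *m S *m (A *m X) <->
              (S *m (A *m X) *m invmx S)^t* = S *m (A *m X) *m invmx S.
  rewrite -(hermitian_congr (S *m (A *m X) *m invmx S) hS uS).
  by rewrite !mulmxA mulmxKV.
have hermXA : (T *m T *m (X *m A))^t* = T *m T *m (X *m A) <->
              (T *m (X *m A) *m invmx T)^t* = T *m (X *m A) *m invmx T.
  rewrite -(hermitian_congr (T *m (X *m A) *m invmx T) hT uT).
  by rewrite !mulmxA mulmxKV.
have uTi : invmx T \in unitmx by rewrite unitmx_inv.
have uSi : invmx S \in unitmx by rewrite unitmx_inv.
rewrite /moore_penrose simAX simXA simAXA simXAX.
split=> [[AXA XAX hAX hXA] | [AXA XAX hAX hXA]]; split.
- by rewrite AXA.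
- by rewrite XAX.
- exact/hermAX.
- exact/hermXA.
- exact: (mulmx_unit_inj uS uTi AXA).
- exact: (mulmx_unit_inj uT uSi XAX).
- exact/hermAX.
- exact/hermXA.
Qed.

Lemma wmoore_penrose_exists A : exists X, wmoore_penrose (S *m S) (T *m T) A X.
Proof.
have [Y AY] := moore_penrose_exists (S *m A *m invmx T).
exists (invmx T *m Y *m S); apply/wmoore_penrose_sqrt.
by rewrite !mulmxA mulmxV // mul1mx mulmxK.
Qed.

End SquareRootWeights.

Section SimilarAdjoint.
Variables (n : nat) (S : 'M[C]_n).
Hypotheses (hS : S^t* = S) (uS : S \in unitmx).
Local Notation sim Y := (S *m Y *m invmx S).

Lemma sim_mul Y Z : sim Y *m sim Z = sim (Y *m Z).
Proof. by rewrite !mulmxA mulmxKV. Qed.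

Lemma sim_inj : injective (fun Y => sim Y).
Proof. by apply: mulmx_unit_inj; rewrite ?unitmx_inv. Qed.

Lemma wadjmx_sim A : sim (wadjmx (S *m S) A) = (sim A)^t*.
Proof.
have invSS : invmx (S *m S) = invmx S *m invmx S.
  have uSS : S *m S \in unitmx by rewrite unitmx_mul uS.
  by rewrite -[RHS]mulmx1 -(mulmxV uSS) !mulmxA mulmxKV // mulVmx // mul1mx.
rewrite /wadjmx invSS !trmxC_mul trmxC_inv hS !mulmxA mulmxV // mul1mx mulmxK //.
Qed.

Lemma wadjmx_fixed A : A = wadjmx (S *m S) A <-> sim A = (sim A)^t*.
Proof. by rewrite -wadjmx_sim; split=> [<- | /sim_inj]. Qed.

Lemma wadjmx_normal A :
  A *m wadjmx (S *m S) A = wadjmx (S *m S) A *m A <->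
  sim A *m (sim A)^t* = (sim A)^t* *m sim A.
Proof. by rewrite -wadjmx_sim !sim_mul; split=> [-> | /sim_inj]. Qed.

End SimilarAdjoint.

End WeightedMoorePenrose.

Section TensorMatrix.
Variables (C : numClosedFieldType) (N : nat) (I : 'I_N -> nat).
Local Notation idx := (mindex I).

Definition tensor_mx (A : tensor C I) : 'M[C]_#|idx| :=
  \matrix_(i, j) A (enum_val i) (enum_val j).

Definition mx_tensor (M : 'M[C]_#|idx|) : tensor C I :=
  fun a b => M (enum_rank a) (enum_rank b).

Lemma mx_tensorK : cancel mx_tensor tensor_mx.
Proof. by move=> M; apply/matrixP => i j; rewrite mxE /mx_tensor !enum_valK. Qed.

Lemma tensor_mxK : cancel tensor_mx mx_tensor.
Proof.
move=> A; apply: functional_extensionality => a.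
by apply: functional_extensionality => b; rewrite /mx_tensor mxE !enum_rankK.
Qed.

Lemma tensor_mx_inj : injective tensor_mx.
Proof. exact: can_inj tensor_mxK. Qed.

Lemma tensor_mx_eqE (A B : tensor C I) : (A = B) = (tensor_mx A = tensor_mx B).
Proof. by apply: propositional_extensionality; split=> [-> | /tensor_mx_inj]. Qed.

Lemma sum_enum_val (F : idx -> C) :
  \sum_(a : idx) F a = \sum_(k < #|idx|) F (enum_val k).
Proof. by rewrite -big_enum_val. Qed.

Lemma tensor_mxM A B : tensor_mx (tmul A B) = tensor_mx A *m tensor_mx B.
Proof.
apply/matrixP => i j; rewrite !mxE /tmul sum_enum_val.
by apply: eq_bigr => k _; rewrite !mxE.
Qed.

Lemma tensor_mxH A : tensor_mx (tH A) = (tensor_mx A)^t*.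
Proof. by apply/matrixP => i j; rewrite !mxE. Qed.

Lemma tensor_mx1 : tensor_mx (@tid C N I) = 1%:M.
Proof. by apply/matrixP => i j; rewrite !mxE /tid (inj_eq (@enum_val_inj _ _)). Qed.

Lemma tensor_qformE (M : tensor C I) (X : tvector C I) :
  let x := \row_k (X (enum_val k))^* in
  \sum_i \sum_j (X i)^* * M i j * X j = (x *m tensor_mx M *m x^t*) 0 0.
Proof.
rewrite /= mxE; under [RHS]eq_bigr => j _ do rewrite mxE big_distrl /=.
rewrite [RHS]exchange_big sum_enum_val; apply: eq_bigr => i _.
rewrite sum_enum_val; apply: eq_bigr => j _.
by rewrite !mxE; congr (_ * _); exact/esym/conjCK.
Qed.

Lemma hpd_mxP (M : tensor C I) :
  hpd M <-> (tensor_mx M)^t* = tensor_mx M /\ posdefmx (tensor_mx M).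
Proof.
rewrite -tensor_mxH -tensor_mx_eqE; split=> -[hM posM]; split=> //.
  move=> x x_neq0; pose X a := (x 0 (enum_rank a))^*.
  have -> : x = \row_k (X (enum_val k))^*.
    by apply/rowP => k; rewrite !mxE /X enum_valK conjCK.
  rewrite -tensor_qformE; apply: posM => X0; case/eqP: x_neq0; apply/rowP => k.
  have /eqP := congr1 (fun Y => Y (enum_val k)) X0.
  by rewrite /X enum_valK conjC_eq0 mxE => /eqP.
move=> X X_neq0; rewrite tensor_qformE; apply: posM; apply/eqP => x0; apply: X_neq0.
apply: functional_extensionality => a.
have /eqP := congr1 (fun y : 'rV_#|idx| => y 0 (enum_rank a)) x0.
by rewrite !mxE enum_rankK conjC_eq0 => /eqP.
Qed.

Lemma the_tensorP (P : tensor C I -> Prop) : (exists A, P A) -> P (the_tensor P).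
Proof. exact: epsilon_spec. Qed.

Lemma tensor_mx_tinv A :
  tensor_mx A \in unitmx -> tensor_mx (tinv A) = invmx (tensor_mx A).
Proof.
move=> uA.
pose P B := tmul A B = @tid C N I /\ tmul B A = @tid C N I.
have [_ /(congr1 tensor_mx)] : P (tinv A).
  apply: the_tensorP; exists (mx_tensor (invmx (tensor_mx A))).
  split; apply: tensor_mx_inj;
    by rewrite tensor_mxM mx_tensorK tensor_mx1 ?mulmxV ?mulVmx.
rewrite tensor_mxM tensor_mx1 => invA_A.
by rewrite -[LHS]mulmx1 -(mulmxV uA) mulmxA invA_A mul1mx.
Qed.

Lemma tensor_mx_tsqrt M : hpd M ->
  let S := tensor_mx (tsqrt M) in
  [/\ S^t* = S, S \in unitmx & S *m S = tensor_mx M].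
Proof.
move=> /hpd_mxP [hM posM] S.
have [R [hR posR RR]] := hermitian_posdefmx_sqrt hM posM.
pose P R := hpd R /\ tmul R R = M.
have [/hpd_mxP [hS posS] SS] : P (tsqrt M).
  apply: the_tensorP; exists (mx_tensor R).
  by rewrite hpd_mxP tensor_mx_eqE tensor_mxM mx_tensorK.
by split; rewrite ?posdefmx_unit // -tensor_mxM SS.
Qed.

Lemma tensor_mx_wct M A : tensor_mx M \in unitmx ->
  tensor_mx (wct M A) = wadjmx (tensor_mx M) (tensor_mx A).
Proof. by move=> uM; rewrite /wct !tensor_mxM tensor_mxH tensor_mx_tinv. Qed.

Lemma is_wmpE M Nw A X :
  is_wmp M Nw A X =
  wmoore_penrose (tensor_mx M) (tensor_mx Nw) (tensor_mx A) (tensor_mx X).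
Proof. by rewrite /is_wmp !tensor_mx_eqE !(tensor_mxM, tensor_mxH). Qed.

Lemma tensor_mx_wmp M Nw A :
    (exists Y, wmoore_penrose (tensor_mx M) (tensor_mx Nw) (tensor_mx A) Y) ->
  wmoore_penrose (tensor_mx M) (tensor_mx Nw) (tensor_mx A)
    (tensor_mx (wmp M Nw A)).
Proof.
case=> Y MY; rewrite -is_wmpE; apply: the_tensorP.
by exists (mx_tensor Y); rewrite is_wmpE mx_tensorK.
Qed.

Lemma tensor_mx_mp A : moore_penrose (tensor_mx A) (tensor_mx (mp A)).
Proof.
have wmp1E Y :
    wmoore_penrose 1%:M 1%:M (tensor_mx A) Y = moore_penrose (tensor_mx A) Y.
  by rewrite /wmoore_penrose !mul1mx.
rewrite -wmp1E -tensor_mx1; apply: tensor_mx_wmp; rewrite tensor_mx1.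
by have [Y AY] := moore_penrose_exists (tensor_mx A); exists Y; rewrite wmp1E.
Qed.

End TensorMatrix.

Theorem theorem4p4 (C : numClosedFieldType) (N : nat) (I : 'I_N -> nat)
  (A Nt : tensor C I) (hN : hpd Nt) :
  let At := tmul (tmul (tsqrt Nt) A) (tinvsqrt Nt) in
  [/\ A = wct Nt A <-> At = tH At,
      tmul A (wct Nt A) = tmul (wct Nt A) A <->
        tmul At (tH At) = tmul (tH At) At,
      tmul (wmp Nt Nt A) (wct Nt (wmp Nt Nt A)) =
        tmul (wct Nt (wmp Nt Nt A)) (wmp Nt Nt A) <->
        tmul (mp At) (tH (mp At)) = tmul (tH (mp At)) (mp At) &
      tmul A (wct Nt A) = tmul (wct Nt A) A <->
        tmul (wmp Nt Nt A) (wct Nt (wmp Nt Nt A)) =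
        tmul (wct Nt (wmp Nt Nt A)) (wmp Nt Nt A)].
Proof.
move=> At.
have [S_herm S_unit S_sq] := tensor_mx_tsqrt hN.
set S := tensor_mx (tsqrt Nt) in S_herm S_unit S_sq.
have N_unit : tensor_mx Nt \in unitmx by rewrite -S_sq unitmx_mul S_unit.
have At_mx : tensor_mx At = S *m tensor_mx A *m invmx S.
  by rewrite !tensor_mxM tensor_mx_tinv.
clearbody At. (* so that [tensor_mxM] cannot unfold [At] *)
have mp_At := tensor_mx_mp At.
have wmp_A : S *m tensor_mx (wmp Nt Nt A) *m invmx S = tensor_mx (mp At).
  apply: moore_penrose_unique mp_At; rewrite At_mx -wmoore_penrose_sqrt // S_sq.
  by apply: tensor_mx_wmp; rewrite -S_sq; exact: wmoore_penrose_exists.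
rewrite At_mx -wmp_A in mp_At.
(* [tensor_mx_wct] must fire before [tensor_mxM], which would unfold [wct]. *)
rewrite !tensor_mx_eqE !(tensor_mx_wct _ N_unit, tensor_mxM, tensor_mxH).
rewrite At_mx -wmp_A -S_sq.
split; [exact: wadjmx_fixed | exact: wadjmx_normal | exact: wadjmx_normal |].
by rewrite !wadjmx_normal //; exact: moore_penrose_normal.
Qed.
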